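(* The contravariant functors $\mathrm{ClpUp}$ and $\mathrm{Pf}$ establish a dual equivalence $\mathsf{CHA} \equiv^{op} \mathsf{CES}$ between the category of conditional Heyting algebras and the category of conditional Esakia spaces.
   Context: A conditional Heyting algebra is a Heyting algebra $(A,\top,\bot,\wedge,\vee,\to)$ with a binary operator $\mathrel{\Box\!\!\!\rightarrow}$ satisfying $a \mathrel{\Box\!\!\!\rightarrow} (b\wedge c) = (a\mathrel{\Box\!\!\!\rightarrow} b)\wedge(a\mathrel{\Box\!\!\!\rightarrow} c)$ and $a\mathrel{\Box\!\!\!\rightarrow}\top=\top$; morphisms ($\mathsf{CHA}$) are Heyting homomorphisms preserving $\mathrel{\Box\!\!\!\rightarrow}$. An Esakia space is a nonempty poset $(X,\leq)$ with a compact topology $\tau$ such that $x\not\leq y$ implies some clopen upset contains $x$ but not $y$, and ${\downarrow}a$ is clopen for each clopen $a$. A conditional Esakia space is an Esakia space $(X,\leq,\tau)$ with relations $\mathcal{R}=\{R_a \mid a \text{ a clopen upset}\}$ such that: $a \Rightarrow_c b := \{x \mid R_a[x]\subseteq b\}$ is clopen for all clopen upsets $a,b$; $(\leq\circ R_a\circ\leq)=R_a$; and $R_a[x]$ is closed for all $x$. Morphisms ($\mathsf{CES}$) are continuous bounded morphisms $f$ (order-preserving, and $f(x)\leq' z'$ implies $z'=f(z)$ for some $z\geq x$) such that for all clopen upsets $a'$: $xR_{f^{-1}(a')}y$ implies $f(x)R_{a'}f(y)$, and $f(x)R_{a'}z'$ implies there is $z$ with $xR_{f^{-1}(a')}z$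 and $f(z)\leq' z'$. The functor $\mathrm{ClpUp}$ sends a conditional Esakia space to the conditional Heyting algebra of its clopen upsets with $X,\emptyset,\cap,\cup$, implication $a\Rightarrow b = X\setminus{\downarrow}(a\setminus b)$ and conditional $\Rightarrow_c$ above, and a morphism $f$ to $f^{-1}$. The functor $\mathrm{Pf}$ sends a conditional Heyting algebra $A$ to its set of prime filters ordered by inclusion, with topology generated by the sets $\theta(a)=\{p \mid a\in p\}$ and their complements, and relations $x R_{\theta(a)} y$ iff $\{b\in A\mid a\mathrel{\Box\!\!\!\rightarrow} b\in x\}\subseteq y$; it sends a homomorphism $h$ to $h^{-1}$. *)

From Stdlib Require Import List Classical.

Record CHAdata := {
  cha_car :> Type;
  cha_top : cha_car;
  cha_bot : cha_car;
  cha_meet : cha_car -> cha_car -> cha_car;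
  cha_join : cha_car -> cha_car -> cha_car;
  cha_imp : cha_car -> cha_car -> cha_car;
  cha_cond : cha_car -> cha_car -> cha_car
}.

Arguments cha_top {c}.
Arguments cha_bot {c}.
Arguments cha_meet {c} _ _.
Arguments cha_join {c} _ _.
Arguments cha_imp {c} _ _.
Arguments cha_cond {c} _ _.

Definition cha_le {A : CHAdata} (a b : A) : Prop := cha_meet a b = a.

Record is_CHA (A : CHAdata) : Prop := {
  meet_assoc : forall a b c : A, cha_meet a (cha_meet b c) = cha_meet (cha_meet a b) c;
  meet_comm : forall a b : A, cha_meet a b = cha_meet b a;
  join_assoc : forall a b c : A, cha_join a (cha_join b c) = cha_join (cha_join a b) c;
  join_comm : forall a b : A, cha_join a b = cha_join b a;
  meet_join_absorb : forall a b : A, cha_meet a (cha_join a b) = a;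
  join_meet_absorb : forall a b : A, cha_join a (cha_meet a b) = a;
  meet_top : forall a : A, cha_meet a cha_top = a;
  join_bot : forall a : A, cha_join a cha_bot = a;
  imp_residual : forall a b c : A, cha_le (cha_meet a b) c <-> cha_le a (cha_imp b c);
  top_neq_bot : (cha_top : A) <> cha_bot;
  cond_meet : forall a b c : A,
      cha_cond a (cha_meet b c) = cha_meet (cha_cond a b) (cha_cond a c);
  cond_top : forall a : A, cha_cond a cha_top = cha_top
}.

Record is_CHA_hom (A B : CHAdata) (h : A -> B) : Prop := {
  hom_top : h cha_top = cha_top;
  hom_bot : h cha_bot = cha_bot;
  hom_meet : forall a b, h (cha_meet a b) = cha_meet (h a) (h b);
  hom_join : forall a b, h (cha_join a b) = cha_join (h a) (h b);
  hom_imp : forall a b, h (cha_imp a b) = cha_imp (h a) (h b);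
  hom_cond : forall a b, h (cha_cond a b) = cha_cond (h a) (h b)
}.

Definition CHA_iso (A B : CHAdata) (h : A -> B) : Prop :=
  is_CHA_hom A B h /\
  exists g : B -> A, is_CHA_hom B A g /\
    (forall a, g (h a) = a) /\ (forall b, h (g b) = b).

(* A set with a binary relation, a topology (given by its open sets),
   and a family of relations R_U indexed by subsets U (only the R_a for
   clopen upsets a are ever used). *)
Record CESdata := {
  ces_car :> Type;
  ces_le : ces_car -> ces_car -> Prop;
  ces_open : (ces_car -> Prop) -> Prop;
  ces_R : (ces_car -> Prop) -> ces_car -> ces_car -> Prop;
  ces_open_full : ces_open (fun _ => True);
  ces_open_inter : forall U V, ces_open U -> ces_open V -> ces_open (fun x => U x /\ V x);
  ces_open_union : forall F : (ces_car -> Prop) -> Prop,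
      (forall U, F U -> ces_open U) -> ces_open (fun x => exists U, F U /\ U x);
  ces_open_ext : forall U V, (forall x, U x <-> V x) -> ces_open U -> ces_open V
}.

Arguments ces_le {c} _ _.
Arguments ces_open {c} _.
Arguments ces_R {c} _ _ _.

Definition clopen {X : CESdata} (U : X -> Prop) : Prop :=
  ces_open U /\ ces_open (fun x => ~ U x).
Definition upset {X : CESdata} (U : X -> Prop) : Prop :=
  forall x y, ces_le x y -> U x -> U y.
Definition clopen_up {X : CESdata} (U : X -> Prop) : Prop := clopen U /\ upset U.
Definition downset {X : CESdata} (U : X -> Prop) : X -> Prop :=
  fun x => exists y, ces_le x y /\ U y.
Definition compact (X : CESdata) : Prop :=
  forall F : (X -> Prop) -> Prop, (forall U, F U -> ces_open U) ->
    (forall x, exists U, F U /\ U x) ->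
    exists l : list (X -> Prop), (forall U, In U l -> F U) /\
                                 (forall x, exists U, In U l /\ U x).
Definition cboxset {X : CESdata} (a b : X -> Prop) : X -> Prop :=
  fun x => forall y, ces_R a x y -> b y.

Record is_CES (X : CESdata) : Prop := {
  ces_nonempty : inhabited X;
  le_refl : forall x : X, ces_le x x;
  le_trans : forall x y z : X, ces_le x y -> ces_le y z -> ces_le x z;
  le_antisym : forall x y : X, ces_le x y -> ces_le y x -> x = y;
  ces_compact : compact X;
  ces_separation : forall x y : X, ~ ces_le x y ->
      exists a : X -> Prop, clopen_up a /\ a x /\ ~ a y;
  ces_down_clopen : forall a : X -> Prop, clopen a -> clopen (downset a);
  ces_cbox_clopen : forall a b : X -> Prop, clopen_up a -> clopen_up b ->
      clopen (cboxset a b);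
  ces_R_le : forall a : X -> Prop, clopen_up a -> forall x y : X,
      (exists x' y', ces_le x x' /\ ces_R a x' y' /\ ces_le y' y) <-> ces_R a x y;
  ces_R_closed : forall a : X -> Prop, clopen_up a -> forall x : X,
      ces_open (fun y => ~ ces_R a x y)
}.

Record is_CES_mor (X Y : CESdata) (f : X -> Y) : Prop := {
  mor_cont : forall U : Y -> Prop, ces_open U -> ces_open (fun x => U (f x));
  mor_mono : forall x y : X, ces_le x y -> ces_le (f x) (f y);
  mor_bounded : forall (x : X) (z' : Y), ces_le (f x) z' ->
      exists z, ces_le x z /\ f z = z';
  mor_R_forth : forall a' : Y -> Prop, clopen_up a' -> forall x y : X,
      ces_R (fun u => a' (f u)) x y -> ces_R a' (f x) (f y);
  mor_R_back : forall a' : Y -> Prop, clopen_up a' -> forall (x : X) (z' : Y),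
      ces_R a' (f x) z' ->
      exists z, ces_R (fun u => a' (f u)) x z /\ ces_le (f z) z'
}.

Definition CES_iso (X Y : CESdata) (f : X -> Y) : Prop :=
  is_CES_mor X Y f /\
  exists g : Y -> X, is_CES_mor Y X g /\
    (forall x, g (f x) = x) /\ (forall y, f (g y) = y).

Lemma open_empty (X : CESdata) : ces_open (fun _ : X => False).
Proof.
  apply (ces_open_ext X (fun x => exists U, (fun _ : X -> Prop => False) U /\ U x)).
  - intro x; split; [intros [U [[] _]] | intros []].
  - apply ces_open_union; intros U [].
Qed.

Lemma open_union2 (X : CESdata) (U V : X -> Prop) :
  ces_open U -> ces_open V -> ces_open (fun x => U x \/ V x).
Proof.
  intros HU HV.
  apply (ces_open_ext X (fun x => exists W, (W = U \/ W = V) /\ W x)).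
  - intro x; split.
    + intros [W [[-> | ->] H]]; auto.
    + intros [H|H]; eauto.
  - apply ces_open_union; intros W [-> | ->]; auto.
Qed.

Definition ClpT (X : CESdata) : Type := { a : X -> Prop | clopen_up a }.

Lemma clopen_up_full (X : CESdata) : clopen_up (fun _ : X => True).
Proof.
  split; [split|].
  - apply ces_open_full.
  - apply (ces_open_ext X (fun _ => False)); [intro; tauto | apply open_empty].
  - intros ? ? ? ?; auto.
Qed.

Lemma clopen_up_empty (X : CESdata) : clopen_up (fun _ : X => False).
Proof.
  split; [split|].
  - apply open_empty.
  - apply (ces_open_ext X (fun _ => True)); [intro; tauto | apply ces_open_full].
  - intros ? ? ? ?; auto.
Qed.

Lemma clopen_up_meet (X : CESdata) (a b : X -> Prop) :
  clopen_up a -> clopen_up b -> clopen_up (fun x => a x /\ b x).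
Proof.
  intros [[Ha Hna] Ua] [[Hb Hnb] Ub]; split; [split|].
  - apply ces_open_inter; auto.
  - apply (ces_open_ext X (fun x => ~ a x \/ ~ b x)).
    + intro x; split; [tauto|]. intro H; destruct (classic (a x)); tauto.
    + apply open_union2; auto.
  - intros x y Hxy [H1 H2]; split; eauto.
Qed.

Lemma clopen_up_join (X : CESdata) (a b : X -> Prop) :
  clopen_up a -> clopen_up b -> clopen_up (fun x => a x \/ b x).
Proof.
  intros [[Ha Hna] Ua] [[Hb Hnb] Ub]; split; [split|].
  - apply open_union2; auto.
  - apply (ces_open_ext X (fun x => ~ a x /\ ~ b x)).
    + intro x; tauto.
    + apply ces_open_inter; auto.
  - intros x y Hxy [H|H]; [left|right]; eauto.
Qed.

Definition imp_set {X : CESdata} (a b : X -> Prop) : X -> Prop :=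
  fun x => ~ downset (fun y => a y /\ ~ b y) x.

Lemma clopen_up_imp (X : CESdata) (HX : is_CES X) (a b : X -> Prop) :
  clopen_up a -> clopen_up b -> clopen_up (imp_set a b).
Proof.
  intros [[Ha Hna] Ua] [[Hb Hnb] Ub].
  assert (Hc : clopen (fun y => a y /\ ~ b y)).
  { split.
    - apply ces_open_inter; auto.
    - apply (ces_open_ext X (fun x => ~ a x \/ b x)).
      + intro x; split; [tauto|]. intro H; destruct (classic (a x)); destruct (classic (b x)); tauto.
      + apply open_union2; auto. }
  destruct (ces_down_clopen X HX _ Hc) as [Hd Hnd].
  split; [split|].
  - exact Hnd.
  - apply (ces_open_ext X (downset (fun y => a y /\ ~ b y))); [|exact Hd].
    intro x; unfold imp_set; split; [tauto|]. apply NNPP.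
  - intros x y Hxy Hx [z [Hyz Hz]]. apply Hx. exists z; split; [|exact Hz].
    eapply (le_trans X HX); eauto.
Qed.

Lemma clopen_up_cbox (X : CESdata) (HX : is_CES X) (a b : X -> Prop) :
  clopen_up a -> clopen_up b -> clopen_up (cboxset a b).
Proof.
  intros Ha Hb; split.
  - apply (ces_cbox_clopen X HX); auto.
  - intros x x' Hxx' Hx y Hy. apply Hx.
    apply (ces_R_le X HX a Ha). exists x', y; repeat split; auto.
    apply (le_refl X HX).
Qed.

Definition ClpUp (X : CESdata) (HX : is_CES X) : CHAdata := {|
  cha_car := ClpT X;
  cha_top := exist _ _ (clopen_up_full X);
  cha_bot := exist _ _ (clopen_up_empty X);
  cha_meet := fun a b => exist _ _ (clopen_up_meet X _ _ (proj2_sig a) (proj2_sig b));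
  cha_join := fun a b => exist _ _ (clopen_up_join X _ _ (proj2_sig a) (proj2_sig b));
  cha_imp := fun a b => exist _ _ (clopen_up_imp X HX _ _ (proj2_sig a) (proj2_sig b));
  cha_cond := fun a b => exist _ _ (clopen_up_cbox X HX _ _ (proj2_sig a) (proj2_sig b))
|}.

Lemma clopen_up_preim (X Y : CESdata) (f : X -> Y) (Hf : is_CES_mor X Y f)
  (a : Y -> Prop) : clopen_up a -> clopen_up (fun x => a (f x)).
Proof.
  intros [[Ho Hno] Hu]; split; [split|].
  - exact (mor_cont X Y f Hf a Ho).
  - exact (mor_cont X Y f Hf (fun y => ~ a y) Hno).
  - intros x y Hxy Hx. exact (Hu _ _ (mor_mono X Y f Hf x y Hxy) Hx).
Qed.

Definition clp_mor (X Y : CESdata) (f : X -> Y) (Hf : is_CES_mor X Y f) :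
  ClpT Y -> ClpT X :=
  fun a => exist _ (fun x => proj1_sig a (f x))
                 (clopen_up_preim X Y f Hf _ (proj2_sig a)).

Record prime_filter (A : CHAdata) (p : A -> Prop) : Prop := {
  pf_top : p cha_top;
  pf_up : forall a b, p a -> cha_le a b -> p b;
  pf_meet : forall a b, p a -> p b -> p (cha_meet a b);
  pf_proper : ~ p cha_bot;
  pf_prime : forall a b, p (cha_join a b) -> p a \/ p b
}.

Definition PfT (A : CHAdata) : Type := { p : A -> Prop | prime_filter A p }.

Definition theta (A : CHAdata) (a : A) : PfT A -> Prop := fun p => proj1_sig p a.

Inductive gen_open {T : Type} (S : (T -> Prop) -> Prop) : (T -> Prop) -> Prop :=
| go_sub : forall U, S U -> gen_open S U
| go_full : gen_open S (fun _ => True)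
| go_inter : forall U V, gen_open S U -> gen_open S V -> gen_open S (fun x => U x /\ V x)
| go_union : forall F : (T -> Prop) -> Prop, (forall U, F U -> gen_open S U) ->
    gen_open S (fun x => exists U, F U /\ U x)
| go_ext : forall U V, (forall x, U x <-> V x) -> gen_open S U -> gen_open S V.

Definition Pf_subbasis (A : CHAdata) (U : PfT A -> Prop) : Prop :=
  exists a : A, (forall p, U p <-> theta A a p) \/ (forall p, U p <-> ~ theta A a p).

Definition Pf_R (A : CHAdata) (U : PfT A -> Prop) (x y : PfT A) : Prop :=
  exists a : A, (forall p, U p <-> theta A a p) /\
    (forall b : A, proj1_sig x (cha_cond a b) -> proj1_sig y b).

Definition Pf (A : CHAdata) : CESdata := {|
  ces_car := PfT A;
  ces_le := fun p q => forall a, proj1_sig p a -> proj1_sig q a;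
  ces_open := gen_open (Pf_subbasis A);
  ces_R := Pf_R A;
  ces_open_full := go_full _;
  ces_open_inter := go_inter _;
  ces_open_union := go_union _;
  ces_open_ext := go_ext _
|}.

Lemma prime_filter_preim (A B : CHAdata) (h : A -> B) (Hh : is_CHA_hom A B h)
  (p : B -> Prop) : prime_filter B p -> prime_filter A (fun a => p (h a)).
Proof.
  intros [Pt Pu Pm Pb Pp]; split.
  - rewrite (hom_top A B h Hh); exact Pt.
  - intros a b Ha Hab. apply (Pu (h a)); auto. unfold cha_le in *.
    rewrite <- (hom_meet A B h Hh), Hab; reflexivity.
  - intros a b Ha Hb; rewrite (hom_meet A B h Hh); auto.
  - rewrite (hom_bot A B h Hh); exact Pb.
  - intros a b H; rewrite (hom_join A B h Hh) in H; auto.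
Qed.

Definition pf_mor (A B : CHAdata) (h : A -> B) (Hh : is_CHA_hom A B h) :
  PfT B -> PfT A :=
  fun p => exist _ (fun a => proj1_sig p (h a))
                 (prime_filter_preim A B h Hh _ (proj2_sig p)).

(** The unit [a ↦ θ(a)] is an isomorphism because the clopen upsets of [Pf A]
    are exactly the sets [θ(a)].  Indeed [Pf A] is compact (Alexander's subbasis
    lemma plus the prime filter theorem), so the complement of a clopen upset [U]
    is a finite union of sets [θ(c) ∖ θ(d)]; since [U] is an upset and
    [↓(θ(c) ∖ θ(d))] is the complement of [θ(c → d)], [U] is [θ] of a finite meet
    of implications.  The counit [x ↦ {a | x ∈ a}] is bijective by compactness and
    the separation axiom.  The conditional needs one more fact on each side: the
    [R_θ(a)]-successors of [x] are the prime filters containing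
    [{b | a □→ b ∈ x}], whence [θ(a) ⇒_c θ(b) = θ(a □→ b)] by the prime filter
    theorem; and [R_a[x]] is closed, so a point outside it is separated from it by
    a clopen upset, whence the counit reflects [R_a]. *)

From Stdlib Require Import List Classical ClassicalEpsilon FunctionalExtensionality
  PropExtensionality ProofIrrelevance.
From mathcomp Require classical_sets.

Lemma pred_ext {T : Type} (P Q : T -> Prop) : (forall x, P x <-> Q x) -> P = Q.
Proof.
  intro H; apply functional_extensionality; intro x.
  apply propositional_extensionality, H.
Qed.

Lemma sig_ext {T : Type} {P : T -> Prop} (x y : sig P) :
  proj1_sig x = proj1_sig y -> x = y.
Proof.
  destruct x as [x Hx], y as [y Hy]; simpl; intros ->.
  f_equal; apply proof_irrelevance.
Qed.

(** * Tukey's lemma and Alexander's subbasis lemma *)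

Section Tukey.
Variables (T : Type) (ok : list T -> Prop).
Hypothesis ok_incl : forall l l', incl l l' -> ok l' -> ok l.

Definition finitely_ok (X : T -> Prop) : Prop :=
  forall l, (forall t, In t l -> X t) -> ok l.

Lemma chain_list_bound (x0 : T -> Prop) (C : (T -> Prop) -> Prop) (l : list T) :
  classical_sets.total_on C classical_sets.subset ->
  (forall t, In t l -> x0 t \/ exists2 X, C X & X t) ->
  (forall t, In t l -> x0 t) \/ exists X, C X /\ forall t, In t l -> x0 t \/ X t.
Proof.
  intro Hch; induction l as [|t l IH]; intro Hl.
  - left; intros t [].
  - destruct IH as [Hx0|[X [HX HlX]]]; [intros; apply Hl; right; auto| |].
    + destruct (Hl t (or_introl eq_refl)) as [Ht|[X HX Ht]].
      * left; intros u [<-|Hu]; auto.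
      * right; exists X; split; auto. intros u [<-|Hu]; auto.
    + right. destruct (Hl t (or_introl eq_refl)) as [Ht|[Y HY Ht]].
      * exists X; split; auto. intros u [<-|Hu]; auto.
      * destruct (Hch X Y HX HY) as [HXY|HYX].
        -- exists Y; split; auto.
           intros u [<-|Hu]; auto. destruct (HlX u Hu); auto.
        -- exists X; split; auto. intros u [<-|Hu]; auto.
Qed.

Lemma incl_cons_split (X : T -> Prop) (t : T) (l : list T) :
  (forall u, In u l -> X u \/ u = t) ->
  exists l', (forall u, In u l' -> X u) /\ incl l (t :: l').
Proof.
  induction l as [|u l IH]; intro Hl.
  - exists nil; split; [intros _ []|intros _ []].
  - destruct IH as [l' [Hl' Hincl]]; [intros; apply Hl; right; auto|].
    destruct (Hl u (or_introl eq_refl)) as [Hu|<-].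
    + exists (u :: l'); split; [intros v [<-|Hv]; auto|].
      intros v [<-|Hv]; [right; left; auto|].
      destruct (Hincl v Hv) as [<-|Hv']; [left|right; right]; auto.
    + exists l'; split; auto. intros v [<-|Hv]; [left|]; auto.
Qed.

(** Tukey's lemma.  Maximality of [M] is stated through finite witnesses:
    whatever lies outside [M] spoils some finite part of [M]. *)
Theorem tukey (x0 : T -> Prop) : finitely_ok x0 ->
  exists M, (forall t, x0 t -> M t) /\ finitely_ok M /\
    forall t, ~ M t -> exists l, (forall u, In u l -> M u) /\ ~ ok (t :: l).
Proof.
  intro H0.
  destruct (@classical_sets.Zorn_bigcup T (fun Y => finitely_ok (fun u => x0 u \/ Y u)))
    as [Y [HY Hmax]].
  - intros C HC Hch l Hl.
    destruct (chain_list_bound x0 C l Hch Hl) as [Hx0|[X [HX HlX]]].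
    + apply H0; auto.
    + apply (HC X HX); auto.
  - exists (fun u => x0 u \/ Y u); split; [auto|split; [exact HY|]].
    intros t Ht.
    assert (Hnot : ~ finitely_ok (fun u => (x0 u \/ Y u) \/ u = t)).
    { intro Hok. apply Ht; right. apply NNPP; intro HYt.
      apply (Hmax (fun u => Y u \/ u = t)).
      - split; [intros u Hu; left; exact Hu|].
        intro Hsub. exact (HYt (Hsub t (or_intror eq_refl))).
      - intros l Hl. apply Hok. intros u Hu.
        destruct (Hl u Hu) as [|[|]]; auto. }
    apply not_all_ex_not in Hnot; destruct Hnot as [l Hl].
    apply imply_to_and in Hl; destruct Hl as [Hl Hnok].
    destruct (incl_cons_split _ t l Hl) as [l' [Hl' Hincl]].
    exists l'; split; auto.
    intro Hok; apply Hnok, (ok_incl _ _ Hincl Hok).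
Qed.

End Tukey.

Definition covers {T : Type} (F : (T -> Prop) -> Prop) : Prop :=
  forall x, exists U, F U /\ U x.
Definition covering {T : Type} (l : list (T -> Prop)) : Prop :=
  forall x, exists U, In U l /\ U x.
Definition finite_subcover {T : Type} (F : (T -> Prop) -> Prop) : Prop :=
  exists l, (forall U, In U l -> F U) /\ covering l.

Section Subbasis.
Variables (T : Type) (S : (T -> Prop) -> Prop).

Lemma covering_inter (M : (T -> Prop) -> Prop) (l : list (T -> Prop)) :
  (forall V, In V l -> exists LV, (forall W, In W LV -> M W) /\ covering (V :: LV)) ->
  exists L, (forall W, In W L -> M W) /\
    forall y, (forall V, In V l -> V y) \/ exists W, In W L /\ W y.
Proof.
  induction l as [|V l IH]; intro Hl.
  - exists nil; split; [intros _ []|]. intro y; left; intros _ [].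
  - destruct IH as [L [HL HLcov]]; [intros; apply Hl; right; auto|].
    destruct (Hl V (or_introl eq_refl)) as [LV [HLV HLVcov]].
    exists (LV ++ L); split.
    + intros W HW; apply in_app_or in HW; destruct HW; auto.
    + intro y. destruct (classic (V y)) as [HVy|HVy].
      * destruct (HLcov y) as [Hy|[W [HW HWy]]].
        -- left; intros W [<-|HW]; [exact HVy|exact (Hy W HW)].
        -- right; exists W; split; [apply in_or_app; right|]; auto.
      * destruct (HLVcov y) as [W [[<-|HW] HWy]]; [contradiction|].
        right; exists W; split; [apply in_or_app; left|]; auto.
Qed.

Lemma gen_open_basis (U : T -> Prop) : gen_open S U -> forall x, U x ->
  exists l, (forall V, In V l -> S V /\ V x) /\
            (forall y, (forall V, In V l -> V y) -> U y).
Proof.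
  induction 1 as [U HS| |U V _ IHU _ IHV|F _ IH|U V HUV _ IH]; intros x Hx.
  - exists (U :: nil); split; [intros V [<-|[]]; auto|].
    intros y Hy; apply Hy; left; auto.
  - exists nil; split; [intros _ []|auto].
  - destruct Hx as [HUx HVx].
    destruct (IHU x HUx) as [l1 [H1 H1']], (IHV x HVx) as [l2 [H2 H2']].
    exists (l1 ++ l2); split.
    + intros W HW; apply in_app_or in HW; destruct HW; auto.
    + intros y Hy; split; [apply H1'|apply H2']; intros W HW; apply Hy, in_or_app; auto.
  - destruct Hx as [U [HU HUx]]. destruct (IH U HU x HUx) as [l [Hl Hl']].
    exists l; split; auto. intros y Hy; exists U; auto.
  - apply HUV in Hx. destruct (IH x Hx) as [l [Hl Hl']].
    exists l; split; auto. intros y Hy; apply HUV; auto.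
Qed.

(** A maximal family without finite subcover
    containing a given cover (Tukey) must contain a subbasic member around every
    point: otherwise each subbasic set of a basic neighbourhood completes the
    family to a finite cover, and so does their intersection. *)
Theorem alexander_subbasis :
  (forall F, (forall U, F U -> S U) -> covers F -> finite_subcover F) ->
  forall F, (forall U, F U -> gen_open S U) -> covers F -> finite_subcover F.
Proof.
  intros Hsub F HFo HF. apply NNPP; intro Hno.
  destruct (tukey (T -> Prop) (fun l => ~ covering l)) with (x0 := F)
    as [M [HFM [HMok HMmax]]].
  - intros l l' Hincl Hl' Hl. apply Hl'; intro x.
    destruct (Hl x) as [U [HU HUx]]. exists U; auto.
  - intros l Hl Hcov. apply Hno; exists l; auto.
  - assert (HMS : covers (fun V => M V /\ S V)).
    { intro x. destruct (HF x) as [U [HU HUx]].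
      destruct (gen_open_basis U (HFo U HU) x HUx) as [l [Hl HlU]].
      apply NNPP; intro Hx.
      destruct (covering_inter M l) as [L [HL HLcov]].
      { intros V HV. destruct (Hl V HV) as [HSV HVx].
        destruct (HMmax V) as [LV [HLV HLVcov]]; [intro HMV; apply Hx; exists V; auto|].
        exists LV; split; [exact HLV|apply NNPP, HLVcov]. }
      apply (HMok (U :: L)).
      - intros W [<-|HW]; auto.
      - intro y. destruct (HLcov y) as [Hy|[W [HW HWy]]].
        + exists U; split; [left|apply HlU]; auto.
        + exists W; split; [right|]; auto. }
    destruct (Hsub _ (fun V HV => proj2 HV) HMS) as [l [Hl Hcov]].
    apply (HMok l); [intros V HV; apply Hl; auto|exact Hcov].
Qed.

End Subbasis.

(** * Generalities on conditional Esakia spaces *)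

Lemma compact_closed_cover (X : CESdata) {I : Type} (K : X -> Prop) (P : I -> Prop)
  (G : I -> X -> Prop) :
  compact X -> ces_open (fun x => ~ K x) -> (forall i, P i -> ces_open (G i)) ->
  (forall x, K x -> exists i, P i /\ G i x) ->
  exists l, (forall i, In i l -> P i) /\ forall x, K x -> exists i, In i l /\ G i x.
Proof.
  intros HX HK HG Hcov.
  set (F := fun U : X -> Prop => (exists i, P i /\ U = G i) \/ U = (fun x => ~ K x)).
  destruct (HX F) as [L [HLF HL]].
  - intros U [[i [Hi ->]]| ->]; auto.
  - intro x. destruct (classic (K x)) as [Hx|Hx].
    + destruct (Hcov x Hx) as [i [Hi HGi]]. exists (G i); split; auto. left; eauto.
    + exists (fun x => ~ K x); split; auto. right; reflexivity.
  - assert (Hidx : forall L, (forall U, In U L -> F U) -> exists l,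
        (forall i, In i l -> P i) /\
        forall x, K x -> (exists U, In U L /\ U x) -> exists i, In i l /\ G i x).
    { clear HLF HL L. intro L; induction L as [|U L IH]; intro HL.
      - exists nil; split; [intros _ []|]. intros x _ [U [[] _]].
      - destruct IH as [l [Hl Hlcov]]; [intros; apply HL; right; auto|].
        destruct (HL U (or_introl eq_refl)) as [[i [Hi ->]]| ->].
        + exists (i :: l); split; [intros j [<-|Hj]; auto|].
          intros x Hx [V [[<-|HV] HVx]]; [exists i; split; [left|]; auto|].
          destruct (Hlcov x Hx) as [j [Hj HGj]]; [exists V; auto|].
          exists j; split; [right|]; auto.
        + exists l; split; auto.
          intros x Hx [V [[<-|HV] HVx]]; [contradiction|]. apply Hlcov; eauto. }
    destruct (Hidx L HLF) as [l [Hl Hlcov]]. exists l; split; auto.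
Qed.

Lemma gen_open_preimage {T : Type} (S : (T -> Prop) -> Prop) (X : CESdata) (f : X -> T) :
  (forall U, S U -> ces_open (fun x => U (f x))) ->
  forall U, gen_open S U -> ces_open (fun x => U (f x)).
Proof.
  intros Hf U HU.
  induction HU as [U HS| |U V _ IHU _ IHV|F _ IH|U V HUV _ IH].
  - auto.
  - apply ces_open_full.
  - apply ces_open_inter; auto.
  - apply (ces_open_ext X (fun x => exists V, (exists U, F U /\ V = fun x => U (f x)) /\ V x)).
    + intro x; split.
      * intros [V [[U [HU ->]] HUx]]; eauto.
      * intros [U [HU HUx]]. exists (fun x => U (f x)); eauto.
    + apply ces_open_union. intros V [U [HU ->]]; auto.
  - apply (ces_open_ext X (fun x => U (f x))); [intro; apply HUV|exact IH].
Qed.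

Lemma CES_iso_intro (X Y : CESdata) (f : X -> Y) (g : Y -> X) :
  is_CES X -> is_CES Y ->
  (forall x, g (f x) = x) -> (forall y, f (g y) = y) ->
  (forall U, ces_open U -> ces_open (fun x => U (f x))) ->
  (forall U, ces_open U -> ces_open (fun y => U (g y))) ->
  (forall x y, ces_le x y <-> ces_le (f x) (f y)) ->
  (forall a', clopen_up a' -> forall x y,
      ces_R (fun u => a' (f u)) x y <-> ces_R a' (f x) (f y)) ->
  CES_iso X Y f.
Proof.
  intros HX HY Hgf Hfg Hf Hg Hle HR.
  assert (Hgle : forall y y', ces_le y y' -> ces_le (g y) (g y')).
  { intros y y' H. apply Hle. rewrite !Hfg; exact H. }
  assert (HRg : forall a, clopen_up a -> forall y y',
             ces_R (fun v => a (g v)) y y' <-> ces_R a (g y) (g y')).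
  { (* [g⁻¹(a)] is a clopen upset whose [f]-preimage is [a]. *)
    intros a [[Ha Hna] Hup] y y'.
    assert (Ea : (fun u => a (g (f u))) = a) by (apply pred_ext; intro u; rewrite Hgf; tauto).
    assert (Ha' : clopen_up (fun v => a (g v))).
    { split; [split; [apply Hg; exact Ha|apply (Hg (fun x => ~ a x)); exact Hna]|].
      intros v v' Hv; apply Hup, Hgle, Hv. }
    pose proof (HR _ Ha' (g y) (g y')) as H.
    cbv beta in H. rewrite Ea, !Hfg in H. symmetry; exact H. }
  split; [split|exists g; split; [split|split; assumption]].
  - exact Hf.
  - intros x y; apply Hle.
  - intros x z' H. exists (g z'). split; [apply Hle; rewrite Hfg; exact H|apply Hfg].
  - intros a' Ha' x y; apply HR, Ha'.
  - intros a' Ha' x z' H. exists (g z').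
    split; [apply HR; [exact Ha'|rewrite Hfg; exact H]|rewrite Hfg; apply (le_refl Y HY)].
  - exact Hg.
  - exact Hgle.
  - intros y z H. exists (f z). split; [|apply Hgf].
    rewrite <- (Hfg y). apply Hle, H.
  - intros a Ha y y'; apply HRg, Ha.
  - intros a Ha y z H. exists (f z). split; [apply HRg; [exact Ha|rewrite Hgf; exact H]|].
    rewrite Hgf; apply (le_refl X HX).
Qed.

(** * Heyting algebras and the prime filter theorem *)

Definition bigmeet {B : CHAdata} (l : list B) : B := fold_right cha_meet cha_top l.
Definition bigjoin {B : CHAdata} (l : list B) : B := fold_right cha_join cha_bot l.

Section Algebra.
Variables (A : CHAdata) (HA : is_CHA A).
Local Notation mt := (@cha_meet A).
Local Notation jn := (@cha_join A).
Local Notation im := (@cha_imp A).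
Local Notation cd := (@cha_cond A).
Local Notation le := (@cha_le A).
Local Notation tp := (@cha_top A).
Local Notation bt := (@cha_bot A).

Lemma cha_meet_idem (a : A) : mt a a = a.
Proof.
  transitivity (mt a (jn a (mt a a))).
  - rewrite (join_meet_absorb A HA); reflexivity.
  - apply (meet_join_absorb A HA).
Qed.

Lemma cha_le_refl (a : A) : le a a.
Proof. apply cha_meet_idem. Qed.

Lemma cha_le_trans (a b c : A) : le a b -> le b c -> le a c.
Proof.
  unfold cha_le; intros Hab Hbc.
  rewrite <- Hab, <- (meet_assoc A HA), Hbc; reflexivity.
Qed.

Lemma cha_le_antisym (a b : A) : le a b -> le b a -> a = b.
Proof.
  unfold cha_le; intros Hab Hba.
  rewrite <- Hab, (meet_comm A HA); exact Hba.
Qed.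

Lemma cha_meet_lb_l (a b : A) : le (mt a b) a.
Proof.
  unfold cha_le.
  rewrite (meet_comm A HA (mt a b) a), (meet_assoc A HA), cha_meet_idem; reflexivity.
Qed.

Lemma cha_meet_lb_r (a b : A) : le (mt a b) b.
Proof. unfold cha_le. rewrite <- (meet_assoc A HA), cha_meet_idem; reflexivity. Qed.

Lemma cha_meet_glb (a b c : A) : le c a -> le c b -> le c (mt a b).
Proof. unfold cha_le; intros Ha Hb. rewrite (meet_assoc A HA), Ha, Hb; reflexivity. Qed.

Lemma cha_le_join (a b : A) : le a b <-> jn a b = b.
Proof.
  unfold cha_le; split; intro H.
  - rewrite <- H, (join_comm A HA), (meet_comm A HA). apply (join_meet_absorb A HA).
  - rewrite <- H. apply (meet_join_absorb A HA).
Qed.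

Lemma cha_join_ub_l (a b : A) : le a (jn a b).
Proof. apply (meet_join_absorb A HA). Qed.

Lemma cha_join_ub_r (a b : A) : le b (jn a b).
Proof. rewrite (join_comm A HA). apply cha_join_ub_l. Qed.

Lemma cha_join_lub (a b c : A) : le a c -> le b c -> le (jn a b) c.
Proof.
  rewrite !cha_le_join; intros Ha Hb.
  rewrite <- (join_assoc A HA), Hb, Ha; reflexivity.
Qed.

Lemma cha_le_top (a : A) : le a tp.
Proof. apply (meet_top A HA). Qed.

Lemma cha_bot_le (a : A) : le bt a.
Proof. apply cha_le_join. rewrite (join_comm A HA). apply (join_bot A HA). Qed.

Lemma cha_meet_mono (a a' b b' : A) : le a a' -> le b b' -> le (mt a b) (mt a' b').
Proof.
  intros Ha Hb; apply cha_meet_glb.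
  - apply (cha_le_trans _ a); [apply cha_meet_lb_l|exact Ha].
  - apply (cha_le_trans _ b); [apply cha_meet_lb_r|exact Hb].
Qed.

Lemma cha_join_mono (a a' b b' : A) : le a a' -> le b b' -> le (jn a b) (jn a' b').
Proof.
  intros Ha Hb; apply cha_join_lub.
  - apply (cha_le_trans _ a'); [exact Ha|apply cha_join_ub_l].
  - apply (cha_le_trans _ b'); [exact Hb|apply cha_join_ub_r].
Qed.

Lemma cha_imp_mp (a b : A) : le (mt a (im a b)) b.
Proof. rewrite (meet_comm A HA). apply (imp_residual A HA), cha_le_refl. Qed.

Lemma cha_meet_join_distr (a b c : A) : le (mt a (jn b c)) (jn (mt a b) (mt a c)).
Proof.
  rewrite (meet_comm A HA). apply (imp_residual A HA).
  apply cha_join_lub; apply (imp_residual A HA); rewrite (meet_comm A HA);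
    [apply cha_join_ub_l|apply cha_join_ub_r].
Qed.

Lemma cha_cond_mono (a b c : A) : le b c -> le (cd a b) (cd a c).
Proof. unfold cha_le; intro H. rewrite <- (cond_meet A HA), H; reflexivity. Qed.

Lemma bigmeet_lb (l : list A) (a : A) : In a l -> le (bigmeet l) a.
Proof.
  induction l as [|b l IH]; [intros []|]. intros [<-|Ha]; simpl.
  - apply cha_meet_lb_l.
  - apply (cha_le_trans _ (bigmeet l)); [apply cha_meet_lb_r|auto].
Qed.

Lemma bigmeet_glb (l : list A) (c : A) : (forall a, In a l -> le c a) -> le c (bigmeet l).
Proof.
  induction l as [|a l IH]; intro Hl; simpl.
  - apply cha_le_top.
  - apply cha_meet_glb; [apply Hl; left|apply IH; intros; apply Hl; right]; auto.
Qed.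

Lemma bigjoin_ub (l : list A) (a : A) : In a l -> le a (bigjoin l).
Proof.
  induction l as [|b l IH]; [intros []|]. intros [<-|Ha]; simpl.
  - apply cha_join_ub_l.
  - apply (cha_le_trans _ (bigjoin l)); [auto|apply cha_join_ub_r].
Qed.

Lemma bigmeet_incl (l l' : list A) : incl l l' -> le (bigmeet l') (bigmeet l).
Proof. intro H; apply bigmeet_glb; intros a Ha; apply bigmeet_lb, H, Ha. Qed.

Lemma bigjoin_lub (l : list A) (c : A) : (forall a, In a l -> le a c) -> le (bigjoin l) c.
Proof.
  induction l as [|a l IH]; intro Hl; simpl.
  - apply cha_bot_le.
  - apply cha_join_lub; [apply Hl; left|apply IH; intros; apply Hl; right]; auto.
Qed.

Lemma bigjoin_incl (l l' : list A) : incl l l' -> le (bigjoin l) (bigjoin l').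
Proof. intro H; apply bigjoin_lub; intros a Ha; apply bigjoin_ub, H, Ha. Qed.

Record is_filter (F : A -> Prop) : Prop := {
  filter_top : F tp;
  filter_up : forall a b, F a -> le a b -> F b;
  filter_meet : forall a b, F a -> F b -> F (mt a b) }.

Record is_ideal (I : A -> Prop) : Prop := {
  ideal_bot : I bt;
  ideal_down : forall a b, I b -> le a b -> I a;
  ideal_join : forall a b, I a -> I b -> I (jn a b) }.

Lemma filter_bigmeet (F : A -> Prop) (l : list A) :
  is_filter F -> (forall a, In a l -> F a) -> F (bigmeet l).
Proof.
  intros HF; induction l as [|a l IH]; intro Hl; simpl.
  - apply (filter_top F HF).
  - apply (filter_meet F HF); [apply Hl; left|apply IH; intros; apply Hl; right]; auto.
Qed.

Lemma ideal_bigjoin (I : A -> Prop) (l : list A) :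
  is_ideal I -> (forall a, In a l -> I a) -> I (bigjoin l).
Proof.
  intros HI; induction l as [|a l IH]; intro Hl; simpl.
  - apply (ideal_bot I HI).
  - apply (ideal_join I HI); [apply Hl; left|apply IH; intros; apply Hl; right]; auto.
Qed.

Section PrimeFilter.
Variable p : PfT A.
Local Notation "a \in p" := (proj1_sig p a) (at level 70).

Lemma in_pf_top : tp \in p.
Proof. apply (pf_top A _ (proj2_sig p)). Qed.

Lemma in_pf_up (a b : A) : a \in p -> le a b -> b \in p.
Proof. apply (pf_up A _ (proj2_sig p)). Qed.

Lemma not_in_pf_bot : ~ bt \in p.
Proof. apply (pf_proper A _ (proj2_sig p)). Qed.

Lemma in_pf_meet (a b : A) : mt a b \in p <-> a \in p /\ b \in p.
Proof.
  split.
  - intro H; split; apply (in_pf_up _ _ H); [apply cha_meet_lb_l|apply cha_meet_lb_r].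
  - intros [Ha Hb]; apply (pf_meet A _ (proj2_sig p)); auto.
Qed.

Lemma in_pf_join (a b : A) : jn a b \in p <-> a \in p \/ b \in p.
Proof.
  split.
  - apply (pf_prime A _ (proj2_sig p)).
  - intros [H|H]; apply (in_pf_up _ _ H); [apply cha_join_ub_l|apply cha_join_ub_r].
Qed.

Lemma in_pf_imp (a b : A) : a \in p -> im a b \in p -> b \in p.
Proof.
  intros Ha Hab. apply (in_pf_up (mt a (im a b))); [apply in_pf_meet; auto|apply cha_imp_mp].
Qed.

Lemma in_pf_bigmeet (l : list A) : bigmeet l \in p <-> forall a, In a l -> a \in p.
Proof.
  split.
  - intros H a Ha. apply (in_pf_up _ _ H), bigmeet_lb, Ha.
  - induction l as [|a l IH]; intro Hl; simpl; [apply in_pf_top|].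
    apply in_pf_meet; split; [apply Hl; left|apply IH; intros; apply Hl; right]; auto.
Qed.

Lemma in_pf_bigjoin (l : list A) : bigjoin l \in p <-> exists a, In a l /\ a \in p.
Proof.
  split.
  - induction l as [|a l IH]; simpl; intro H; [destruct (not_in_pf_bot H)|].
    apply in_pf_join in H. destruct H as [H|H]; [exists a; auto|].
    destruct (IH H) as [b [Hb Hbp]]. exists b; auto.
  - intros [a [Ha Hap]]. apply (in_pf_up _ _ Hap), bigjoin_ub, Ha.
Qed.

End PrimeFilter.

Definition consistent_with (N : A -> Prop) (l : list A) : Prop :=
  forall l', (forall b, In b l' -> N b) -> ~ le (bigmeet l) (bigjoin l').

Lemma maximal_consistent_prime (M N : A -> Prop) :
  finitely_ok A (consistent_with N) M ->
  (forall a, ~ M a -> exists l l', (forall u, In u l -> M u) /\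
     (forall b, In b l' -> N b) /\ le (mt a (bigmeet l)) (bigjoin l')) ->
  prime_filter A M.
Proof.
  intros HM Hext. split.
  - apply NNPP; intro Hn. destruct (Hext _ Hn) as [l [l' [Hl [Hl' Hle]]]].
    apply (HM l Hl l' Hl'), (cha_le_trans _ (mt tp (bigmeet l))); [|exact Hle].
    apply cha_meet_glb; [apply cha_le_top|apply cha_le_refl].
  - intros a b Ha Hab. apply NNPP; intro Hn.
    destruct (Hext _ Hn) as [l [l' [Hl [Hl' Hle]]]].
    apply (HM (a :: l)) with l'; [intros u [<-|Hu]; auto|exact Hl'|].
    apply (cha_le_trans _ (mt b (bigmeet l))); [|exact Hle].
    apply cha_meet_mono; [exact Hab|apply cha_le_refl].
  - intros a b Ha Hb. apply NNPP; intro Hn.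
    destruct (Hext _ Hn) as [l [l' [Hl [Hl' Hle]]]].
    apply (HM (a :: b :: l)) with l'; [intros u [<-|[<-|Hu]]; auto|exact Hl'|].
    simpl. rewrite (meet_assoc A HA). exact Hle.
  - intro Hbt. apply (HM (bt :: nil)) with nil; [intros u [<-|[]]; auto|intros _ []|].
    apply cha_meet_lb_l.
  - intros a b Hab. apply NNPP; intro Hn. apply not_or_and in Hn; destruct Hn as [Ha Hb].
    destruct (Hext a Ha) as [l1 [l1' [Hl1 [Hl1' Hle1]]]].
    destruct (Hext b Hb) as [l2 [l2' [Hl2 [Hl2' Hle2]]]].
    apply (HM (jn a b :: l1 ++ l2)) with (l1' ++ l2').
    + intros u [<-|Hu]; [exact Hab|]. apply in_app_or in Hu; destruct Hu; auto.
    + intros u Hu; apply in_app_or in Hu; destruct Hu; auto.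
    + simpl. set (m := bigmeet (l1 ++ l2)).
      apply (cha_le_trans _ (jn (mt a m) (mt b m))).
      { rewrite !(meet_comm A HA _ m). apply cha_meet_join_distr. }
      apply (cha_le_trans _ (jn (bigjoin l1') (bigjoin l2'))).
      2:{ apply cha_join_lub; apply bigjoin_incl; [apply incl_appl|apply incl_appr];
          apply incl_refl. }
      apply cha_join_mono.
      * apply (cha_le_trans _ (mt a (bigmeet l1))); [|exact Hle1].
        apply cha_meet_mono; [apply cha_le_refl|apply bigmeet_incl, incl_appl, incl_refl].
      * apply (cha_le_trans _ (mt b (bigmeet l2))); [|exact Hle2].
        apply cha_meet_mono; [apply cha_le_refl|apply bigmeet_incl, incl_appr, incl_refl].
Qed.

(** The prime filter theorem in compactness form: a maximal consistent
    extension of [P] (Tukey) is a prime filter. *)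
Theorem prime_filter_separation (P N : A -> Prop) :
  (forall l, (forall a, In a l -> P a) -> consistent_with N l) ->
  exists p : PfT A, (forall a, P a -> proj1_sig p a) /\ (forall b, N b -> ~ proj1_sig p b).
Proof.
  intro Hcons.
  destruct (tukey A (consistent_with N)) with (x0 := P) as [M [HPM [HM Hmax]]].
  - intros l1 l2 Hincl Hok l' Hl' Hle.
    apply (Hok l' Hl'), (cha_le_trans _ (bigmeet l1)); [apply bigmeet_incl, Hincl|exact Hle].
  - exact Hcons.
  - assert (HMP : prime_filter A M).
    { apply (maximal_consistent_prime M N HM). intros a Ha.
      destruct (Hmax a Ha) as [l [Hl Hnot]].
      apply not_all_ex_not in Hnot; destruct Hnot as [l' Hnot].
      apply imply_to_and in Hnot; destruct Hnot as [Hl' Hle].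
      apply NNPP in Hle. exists l, l'; auto. }
    exists (exist _ M HMP); split; simpl; auto.
    intros b Hb HMb. apply (HM (b :: nil)) with (b :: nil); try (intros u [<-|[]]; auto).
    apply (cha_le_trans _ b); [apply cha_meet_lb_l|apply cha_join_ub_l].
Qed.

Definition meet_closed (P : A -> Prop) : Prop :=
  P tp /\ forall a b, P a -> P b -> P (mt a b).

Definition filter_join (P Q : A -> Prop) : A -> Prop :=
  fun c => exists a b, P a /\ Q b /\ le (mt a b) c.

Lemma filter_join_is_filter (P Q : A -> Prop) :
  meet_closed P -> meet_closed Q -> is_filter (filter_join P Q).
Proof.
  intros [HPt HPm] [HQt HQm]; split.
  - exists tp, tp; repeat split; auto. apply cha_le_top.
  - intros c d [a [b [Ha [Hb Hc]]]] Hcd. exists a, b; repeat split; auto.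
    apply (cha_le_trans _ c); auto.
  - intros c d [a [b [Ha [Hb Hc]]]] [a' [b' [Ha' [Hb' Hd]]]].
    exists (mt a a'), (mt b b'); repeat split; auto.
    apply cha_meet_glb.
    + apply (cha_le_trans _ (mt a b)); [apply cha_meet_mono; apply cha_meet_lb_l|exact Hc].
    + apply (cha_le_trans _ (mt a' b')); [apply cha_meet_mono; apply cha_meet_lb_r|exact Hd].
Qed.

Lemma up_meet_closed (c : A) : meet_closed (fun e => le c e).
Proof. split; [apply cha_le_top|intros; apply cha_meet_glb; auto]. Qed.

Lemma pf_meet_closed (p : PfT A) : meet_closed (proj1_sig p).
Proof. split; [apply in_pf_top|intros a b Ha Hb; apply in_pf_meet; auto]. Qed.

Lemma up_is_filter (a : A) : is_filter (fun e => le a e).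
Proof.
  split; [apply cha_le_top|intros; apply (cha_le_trans _ a0); auto|].
  intros; apply cha_meet_glb; auto.
Qed.

Lemma down_is_ideal (b : A) : is_ideal (fun e => le e b).
Proof.
  split; [apply cha_bot_le|intros; apply (cha_le_trans _ b0); auto|].
  intros; apply cha_join_lub; auto.
Qed.

Corollary prime_filter_theorem (F I : A -> Prop) :
  is_filter F -> is_ideal I -> (forall a, F a -> I a -> False) ->
  exists p : PfT A, (forall a, F a -> proj1_sig p a) /\ (forall b, I b -> ~ proj1_sig p b).
Proof.
  intros HF HI Hdis. apply prime_filter_separation.
  intros l Hl l' Hl' Hle. apply (Hdis (bigmeet l)); [apply filter_bigmeet; auto|].
  apply (ideal_down I HI _ (bigjoin l')); [apply ideal_bigjoin|]; auto.
Qed.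

End Algebra.

(** * The prime filter space *)

Section PrimeFilterSpace.
Variables (A : CHAdata) (HA : is_CHA A).
Local Notation mt := (@cha_meet A).
Local Notation jn := (@cha_join A).
Local Notation im := (@cha_imp A).
Local Notation cd := (@cha_cond A).
Local Notation le := (@cha_le A).
Local Notation tp := (@cha_top A).
Local Notation bt := (@cha_bot A).

Lemma pf_separate (a b : A) : ~ le a b ->
  exists p : PfT A, proj1_sig p a /\ ~ proj1_sig p b.
Proof.
  intro Hab.
  destruct (prime_filter_theorem A HA (fun e => le a e) (fun e => le e b)) as [p [Hp Hp']].
  - apply up_is_filter; auto.
  - apply down_is_ideal; auto.
  - intros c Hac Hcb; apply Hab, (cha_le_trans A HA _ c); auto.
  - exists p; split; [apply Hp, cha_le_refl|apply Hp', cha_le_refl]; auto.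
Qed.

Lemma theta_inj (a b : A) : (forall p, theta A a p <-> theta A b p) -> a = b.
Proof.
  intro H. apply (cha_le_antisym A HA); apply NNPP; intro Hn;
    destruct (pf_separate _ _ Hn) as [p [H1 H2]]; apply H2, H, H1.
Qed.

Lemma Pf_inhabited : inhabited (PfT A).
Proof.
  destruct (pf_separate tp bt) as [p _]; [|exact (inhabits p)].
  intro H. apply (top_neq_bot A HA), (cha_le_antisym A HA); [exact H|apply (cha_bot_le A HA)].
Qed.

Lemma Pf_open_basic (U : PfT A -> Prop) : gen_open (Pf_subbasis A) U ->
  forall p, U p -> exists a b, proj1_sig p a /\ ~ proj1_sig p b /\
    forall q : PfT A, proj1_sig q a -> ~ proj1_sig q b -> U q.
Proof.
  induction 1 as [U HS| |U V _ IHU _ IHV|F _ IH|U V HUV _ IH]; intros p Hp.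
  - destruct HS as [c [H|H]].
    + exists c, bt; repeat split; [apply H; auto|apply not_in_pf_bot; auto|].
      intros q Hq _; apply H, Hq.
    + exists tp, c; repeat split; [apply in_pf_top; auto|apply H; auto|].
      intros q _ Hq; apply H, Hq.
  - exists tp, bt; repeat split; [apply in_pf_top|apply not_in_pf_bot]; auto.
  - destruct Hp as [HUp HVp].
    destruct (IHU p HUp) as [a1 [b1 [Ha1 [Hb1 H1]]]].
    destruct (IHV p HVp) as [a2 [b2 [Ha2 [Hb2 H2]]]].
    exists (mt a1 a2), (jn b1 b2); split; [|split].
    + apply in_pf_meet; auto.
    + rewrite in_pf_join; tauto.
    + intros q Hqa Hqb. rewrite in_pf_meet in Hqa; auto. rewrite in_pf_join in Hqb; auto.
      split; [apply H1|apply H2]; tauto.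
  - destruct Hp as [U [HU HUp]]. destruct (IH U HU p HUp) as [a [b [Ha [Hb H]]]].
    exists a, b; repeat split; auto. intros q Hqa Hqb; exists U; auto.
  - apply HUV in Hp. destruct (IH p Hp) as [a [b [Ha [Hb H]]]].
    exists a, b; repeat split; auto. intros q Hqa Hqb; apply HUV; auto.
Qed.

(** By Alexander's lemma it suffices to treat covers by sets [θ(a)] and
    [¬θ(b)]; a prime filter escaping every finite subcover is exactly what the
    prime filter theorem produces. *)
Lemma Pf_compact : compact (Pf A).
Proof.
  intros F HFo HF.
  apply (alexander_subbasis _ (Pf_subbasis A)); [|exact HFo|exact HF].
  clear F HFo HF. intros F HFS HF.
  set (cotheta := fun b (p : PfT A) => ~ theta A b p).
  destruct (classic (exists l l', (forall b, In b l -> F (cotheta b)) /\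
                      (forall a, In a l' -> F (theta A a)) /\ le (bigmeet l) (bigjoin l')))
    as [[l [l' [Hl [Hl' Hle]]]]|Hno].
  - exists (map cotheta l ++ map (theta A) l'). split.
    + intros U HU. apply in_app_or in HU.
      destruct HU as [HU|HU]; apply in_map_iff in HU; destruct HU as [c [<- Hc]]; auto.
    + intro p. destruct (classic (forall b, In b l -> theta A b p)) as [Hall|Hn].
      * assert (Hj : proj1_sig p (bigjoin l')).
        { apply (in_pf_up A p (bigmeet l)); [apply in_pf_bigmeet; auto|exact Hle]. }
        apply in_pf_bigjoin in Hj; auto. destruct Hj as [a [Ha Hap]].
        exists (theta A a); split; [apply in_or_app; right; apply in_map; auto|exact Hap].
      * apply not_all_ex_not in Hn; destruct Hn as [b Hb].
        apply imply_to_and in Hb; destruct Hb as [Hb Hbp].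
        exists (cotheta b); split; [apply in_or_app; left; apply in_map; auto|exact Hbp].
  - exfalso.
    destruct (prime_filter_separation A HA (fun b => F (cotheta b)) (fun a => F (theta A a)))
      as [p [HpP HpN]].
    { intros l Hl l' Hl' Hle. apply Hno; eauto. }
    destruct (HF p) as [U [HU HUp]]. destruct (HFS U HU) as [a [Ha|Ha]].
    + apply (HpN a); [|apply Ha, HUp].
      replace (theta A a) with U by (apply pred_ext; exact Ha). exact HU.
    + apply Ha in HUp. apply HUp, HpP.
      replace (cotheta a) with U by (apply pred_ext; exact Ha). exact HU.
Qed.

Definition theta_diff (s : A * A) (p : PfT A) : Prop :=
  proj1_sig p (fst s) /\ ~ proj1_sig p (snd s).

Lemma theta_diff_open (s : A * A) : @ces_open (Pf A) (theta_diff s).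
Proof.
  apply (go_ext _ (fun p => theta A (fst s) p /\ ~ theta A (snd s) p)); [reflexivity|].
  apply go_inter; apply go_sub; [exists (fst s); left|exists (snd s); right]; reflexivity.
Qed.

Lemma Pf_clopen_finite_union (U : PfT A -> Prop) : @clopen (Pf A) U ->
  exists L : list (A * A), forall p, U p <-> exists s, In s L /\ theta_diff s p.
Proof.
  intros [HU HnU].
  destruct (compact_closed_cover (Pf A) U (fun s => forall q, theta_diff s q -> U q) theta_diff
              Pf_compact HnU) as [L [HL HLcov]].
  - intros s _; apply theta_diff_open.
  - intros p Hp. destruct (Pf_open_basic U HU p Hp) as [a [b [Ha [Hb H]]]].
    exists (a, b); split; [intros q [Hqa Hqb]; apply H; auto|split; auto].
  - exists L; intro p; split; [apply HLcov|]. intros [s [Hs Hsp]]. apply (HL s Hs), Hsp.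
Qed.

Lemma Pf_down_theta_diff (c d : A) (p : PfT A) :
  (exists q : PfT A, @ces_le (Pf A) p q /\ proj1_sig q c /\ ~ proj1_sig q d) <->
  ~ proj1_sig p (im c d).
Proof.
  split.
  - intros [q [Hpq [Hc Hd]]] Hp. apply Hd, (in_pf_imp A HA q c d Hc), Hpq, Hp.
  - intro Hn.
    destruct (prime_filter_theorem A HA (filter_join A (proj1_sig p) (fun e => le c e))
                (fun e => le e d)) as [q [Hq Hq']].
    + apply (filter_join_is_filter A HA); [apply pf_meet_closed|apply up_meet_closed]; auto.
    + apply down_is_ideal; auto.
    + intros e [m [c' [Hm [Hc' He]]]] Hed. apply Hn, (in_pf_up A p m); [exact Hm|].
      apply (imp_residual A HA), (cha_le_trans A HA _ e); [|exact Hed].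
      apply (cha_le_trans A HA _ (mt m c')); [|exact He].
      apply (cha_meet_mono A HA); [apply (cha_le_refl A HA)|]; auto.
    + exists q; split; [|split].
      * intros a Ha. apply Hq. exists a, tp.
        split; [exact Ha|split; [apply (cha_le_top A HA)|apply (cha_meet_lb_l A HA)]].
      * apply Hq. exists tp, c.
        split; [apply in_pf_top|split; [apply (cha_le_refl A HA)|apply (cha_meet_lb_r A HA)]].
      * apply Hq'; apply (cha_le_refl A HA); auto.
Qed.

Definition imp_meet (L : list (A * A)) : A := bigmeet (map (fun s => im (fst s) (snd s)) L).

Lemma Pf_down_theta_diffs (L : list (A * A)) (p : PfT A) :
  (exists q : PfT A, @ces_le (Pf A) p q /\ exists s, In s L /\ theta_diff s q) <->
  ~ theta A (imp_meet L) p.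
Proof.
  unfold imp_meet, theta; rewrite in_pf_bigmeet; auto. split.
  - intros [q [Hpq [s [Hs [Hs1 Hs2]]]]] H.
    apply Hs2, (in_pf_imp A HA q (fst s)); auto. apply Hpq, H, in_map_iff; exists s; auto.
  - intro H. apply not_all_ex_not in H; destruct H as [a H].
    apply imply_to_and in H; destruct H as [Ha H].
    apply in_map_iff in Ha; destruct Ha as [s [<- Hs]].
    apply Pf_down_theta_diff in H. destruct H as [q [Hpq Hq]].
    exists q; split; [exact Hpq|]. exists s; auto.
Qed.

Lemma Pf_clopen_up (U : PfT A -> Prop) : @clopen_up (Pf A) U ->
  exists a : A, forall p, U p <-> theta A a p.
Proof.
  intros [[HU HnU] Hup].
  destruct (Pf_clopen_finite_union (fun p => ~ U p)) as [L HL].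
  { split; [exact HnU|].
    apply (go_ext _ U); [intro; split; [auto|apply NNPP]|exact HU]. }
  exists (imp_meet L). intro p. split.
  - intro Hp. apply NNPP; intro Hn. apply Pf_down_theta_diffs in Hn.
    destruct Hn as [q [Hpq Hq]]. apply HL in Hq. apply Hq, (Hup p q Hpq Hp).
  - intro H. apply NNPP; intro Hn. apply (proj1 (Pf_down_theta_diffs L p)); [|exact H].
    exists p; split; [intros a Ha; exact Ha|]. apply HL, Hn.
Qed.

Lemma Pf_down_clopen (U : PfT A -> Prop) :
  @clopen (Pf A) U -> @clopen (Pf A) (@downset (Pf A) U).
Proof.
  intro HU. destruct (Pf_clopen_finite_union U HU) as [L HL].
  assert (E : forall p, @downset (Pf A) U p <-> ~ theta A (imp_meet L) p).
  { intro p. rewrite <- Pf_down_theta_diffs. unfold downset.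
    split; intros [q [Hpq Hq]]; exists q; split; auto; apply HL, Hq. }
  split.
  - apply (go_ext _ (fun p => ~ theta A (imp_meet L) p)); [intro p; rewrite E; reflexivity|].
    apply go_sub; exists (imp_meet L); right; reflexivity.
  - apply (go_ext _ (theta A (imp_meet L))); [intro p; rewrite E; split; [tauto|apply NNPP]|].
    apply go_sub; exists (imp_meet L); left; reflexivity.
Qed.

Lemma theta_clopen_up (a : A) : @clopen_up (Pf A) (theta A a).
Proof.
  split; [split|].
  - apply go_sub; exists a; left; reflexivity.
  - apply go_sub; exists a; right; reflexivity.
  - intros p q Hpq Hp; apply Hpq, Hp.
Qed.

Lemma cond_is_filter (a : A) (x : PfT A) : is_filter A (fun b => proj1_sig x (cd a b)).
Proof.
  split.
  - rewrite (cond_top A HA). apply in_pf_top.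
  - intros b c Hb Hbc. apply (in_pf_up A x _ _ Hb), cha_cond_mono; auto.
  - intros b c Hb Hc. rewrite (cond_meet A HA). apply in_pf_meet; auto.
Qed.

Lemma Pf_R_theta (U : PfT A -> Prop) (a : A) (x y : PfT A) :
  (forall p, U p <-> theta A a p) ->
  (Pf_R A U x y <-> forall b, proj1_sig x (cd a b) -> proj1_sig y b).
Proof.
  intro HU; split.
  - intros [a' [Ha' H]]. replace a with a'; [exact H|].
    apply theta_inj; intro p; rewrite <- HU; symmetry; apply Ha'.
  - intro H; exists a; auto.
Qed.

(** A prime filter avoiding [b] but containing every [c] with [a □→ c ∈ x] is
    an [R_θ(a)]-successor of [x] outside [θ(b)]. *)
Lemma Pf_cboxset_theta (a b : A) (x : PfT A) :
  @cboxset (Pf A) (theta A a) (theta A b) x <-> proj1_sig x (cd a b).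
Proof.
  unfold cboxset, theta. split.
  - intro H. apply NNPP; intro Hn.
    destruct (prime_filter_theorem A HA _ _ (cond_is_filter a x) (down_is_ideal A HA b))
      as [y [Hy Hy']].
    + intros c Hc Hcb. apply Hn, (in_pf_up A x _ _ Hc), cha_cond_mono; auto.
    + apply (Hy' b); [apply (cha_le_refl A HA); auto|]. apply H.
      apply (Pf_R_theta _ a); [reflexivity|exact Hy].
  - intros Hx y Hy. apply (Pf_R_theta (theta A a) a x y); [reflexivity|exact Hy|exact Hx].
Qed.

Lemma Pf_cboxset_clopen (U V : PfT A -> Prop) :
  @clopen_up (Pf A) U -> @clopen_up (Pf A) V -> @clopen (Pf A) (@cboxset (Pf A) U V).
Proof.
  intros HU HV.
  destruct (Pf_clopen_up U HU) as [a Ha], (Pf_clopen_up V HV) as [b Hb].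
  apply pred_ext in Ha; apply pred_ext in Hb; subst U V. split.
  - apply (go_ext _ (theta A (cd a b))); [intro x; symmetry; apply Pf_cboxset_theta|].
    apply go_sub; exists (cd a b); left; reflexivity.
  - apply (go_ext _ (fun x => ~ theta A (cd a b) x)).
    + intro x; rewrite Pf_cboxset_theta; reflexivity.
    + apply go_sub; exists (cd a b); right; reflexivity.
Qed.

Lemma Pf_R_le (U : PfT A -> Prop) : @clopen_up (Pf A) U -> forall x y : PfT A,
  (exists x' y', @ces_le (Pf A) x x' /\ Pf_R A U x' y' /\ @ces_le (Pf A) y' y) <->
  Pf_R A U x y.
Proof.
  intros HU x y. destruct (Pf_clopen_up U HU) as [a Ha].
  rewrite (Pf_R_theta U a x y Ha). split.
  - intros [x' [y' [Hxx' [HR Hy'y]]]] b Hb.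
    apply Hy'y, (proj1 (Pf_R_theta U a x' y' Ha) HR), Hxx', Hb.
  - intro H. exists x, y. split; [intros c Hc; exact Hc|].
    split; [apply (proj2 (Pf_R_theta U a x y Ha)), H|intros c Hc; exact Hc].
Qed.

Lemma Pf_R_closed (U : PfT A -> Prop) : @clopen_up (Pf A) U -> forall x : PfT A,
  @ces_open (Pf A) (fun y => ~ Pf_R A U x y).
Proof.
  intros HU x. destruct (Pf_clopen_up U HU) as [a Ha].
  apply (go_ext _ (fun y => exists V,
           (exists b, proj1_sig x (cd a b) /\ V = (fun p => ~ theta A b p)) /\ V y)).
  - intro y. rewrite (Pf_R_theta U a x y Ha). split.
    + intros [V [[b [Hb ->]] Hy]] H. apply Hy, H, Hb.
    + intro H. apply not_all_ex_not in H; destruct H as [b H]. apply imply_to_and in H.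
      exists (fun p => ~ theta A b p); split; [exists b; split; [tauto|reflexivity]|tauto].
  - apply go_union. intros V [b [_ ->]]. apply go_sub; exists b; right; reflexivity.
Qed.

Theorem Pf_is_CES : is_CES (Pf A).
Proof.
  split.
  - exact Pf_inhabited.
  - intros p a Ha; exact Ha.
  - intros p q r Hpq Hqr a Ha; auto.
  - intros p q Hpq Hqp. apply sig_ext, pred_ext; intro a; split; auto.
  - exact Pf_compact.
  - intros p q Hpq. apply not_all_ex_not in Hpq; destruct Hpq as [a Ha].
    apply imply_to_and in Ha. exists (theta A a); split; [apply theta_clopen_up|exact Ha].
  - exact Pf_down_clopen.
  - exact Pf_cboxset_clopen.
  - exact Pf_R_le.
  - exact Pf_R_closed.
Qed.

End PrimeFilterSpace.

(** * Clopen upsets of a conditional Esakia space *)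

Section ClopenUpsets.
Variables (X : CESdata) (HX : is_CES X).
Local Notation C := (ClpUp X HX).

Lemma clp_le (a b : ClpT X) :
  @cha_le C a b <-> forall x, proj1_sig a x -> proj1_sig b x.
Proof.
  split.
  - intros H x Hx. assert (E := f_equal (fun c : ClpT X => proj1_sig c x) H).
    simpl in E. rewrite <- E in Hx. tauto.
  - intro H. apply sig_ext, pred_ext; intro x; simpl. split; [tauto|auto].
Qed.

Theorem ClpUp_is_CHA : is_CHA C.
Proof.
  split; try (intros; apply sig_ext, pred_ext; intro; simpl; unfold cboxset; firstorder).
  - intros a b c. rewrite !clp_le. simpl. unfold imp_set, downset. split.
    + intros H x Hx [y [Hxy [Hb Hc]]]. apply Hc, H. split; auto.
      apply (proj2 (proj2_sig a) x y Hxy Hx).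
    + intros H x [Ha Hb]. apply NNPP; intro Hc. apply (H x Ha). exists x; split; auto.
      apply (le_refl X HX).
  - intro E. destruct (ces_nonempty X HX) as [x].
    assert (E' := f_equal (fun c : ClpT X => proj1_sig c x) E). simpl in E'.
    rewrite <- E'; exact I.
Qed.

Lemma clp_bigmeet (l : list (ClpT X)) (x : X) :
  proj1_sig (@bigmeet C l) x <-> forall a, In a l -> proj1_sig a x.
Proof.
  induction l as [|a l IH]; simpl.
  - split; [intros _ _ []|auto].
  - change (proj1_sig a x /\ proj1_sig (@bigmeet C l) x <->
            forall b, a = b \/ In b l -> proj1_sig b x).
    rewrite IH. split; [intros [Ha Hl] b [<-|Hb]; auto|intro H; split; auto].
Qed.

Lemma clp_bigjoin (l : list (ClpT X)) (x : X) :
  proj1_sig (@bigjoin C l) x <-> exists a, In a l /\ proj1_sig a x.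
Proof.
  induction l as [|a l IH]; simpl.
  - split; [intros []|intros [a [[] _]]].
  - change (proj1_sig a x \/ proj1_sig (@bigjoin C l) x <->
            exists b, (a = b \/ In b l) /\ proj1_sig b x).
    rewrite IH. split; [intros [H|[b [Hb H]]]; eauto|intros [b [[<-|Hb] H]]; eauto].
Qed.

Lemma clp_separate (x y : X) : ~ ces_le x y ->
  exists a : ClpT X, proj1_sig a x /\ ~ proj1_sig a y.
Proof.
  intro H. destruct (ces_separation X HX x y H) as [a [Ha Hxy]].
  exists (exist _ a Ha); exact Hxy.
Qed.

Lemma clp_compl_union_open (a b : ClpT X) :
  ces_open (fun z => ~ proj1_sig a z \/ proj1_sig b z).
Proof.
  apply open_union2; [apply (proj2_sig a)|apply (proj2_sig b)].
Qed.

(** [R_a[x]] is a closed upset: separate each of its points from [y], then use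
    compactness. *)
Lemma clp_R_separation (a : X -> Prop) (Ha : clopen_up a) (x y : X) : ~ ces_R a x y ->
  exists c : ClpT X, cboxset a (proj1_sig c) x /\ ~ proj1_sig c y.
Proof.
  intro Hn.
  destruct (compact_closed_cover X (fun z => ces_R a x z) (fun c : ClpT X => ~ proj1_sig c y)
              (fun c => proj1_sig c) (ces_compact X HX) (ces_R_closed X HX a Ha x))
    as [l [Hl Hlcov]].
  - intros c _. apply (proj2_sig c).
  - intros z Hz. destruct (clp_separate z y) as [c [Hcz Hcy]]; [|exists c; auto].
    intro Hzy. apply Hn, (ces_R_le X HX a Ha).
    exists x, z; split; [apply (le_refl X HX)|split; auto].
  - exists (@bigjoin C l). split.
    + intros z Hz. apply clp_bigjoin, Hlcov, Hz.
    + intro H. apply clp_bigjoin in H. destruct H as [c [Hc H]]. apply (Hl c Hc), H.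
Qed.

Lemma clp_pair_nbhd (U : X -> Prop) (x : X) : ces_open U -> U x ->
  exists a b : ClpT X, proj1_sig a x /\ ~ proj1_sig b x /\
    forall z, proj1_sig a z -> ~ proj1_sig b z -> U z.
Proof.
  intros HU Hx.
  destruct (compact_closed_cover X (fun z => ~ U z)
              (fun s : ClpT X * ClpT X => proj1_sig (fst s) x /\ ~ proj1_sig (snd s) x)
              (fun s z => ~ proj1_sig (fst s) z \/ proj1_sig (snd s) z) (ces_compact X HX))
    as [l [Hl Hlcov]].
  - apply (ces_open_ext X U); [intro z; split; [tauto|apply NNPP]|exact HU].
  - intros s _; apply clp_compl_union_open.
  - intros z Hz. destruct (classic (ces_le x z)) as [Hxz|Hxz].
    + destruct (clp_separate z x) as [b [Hbz Hbx]].
      { intro Hzx. apply Hz. rewrite (le_antisym X HX z x Hzx Hxz). exact Hx. }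
      exists (@cha_top C, b); simpl; auto.
    + destruct (clp_separate x z Hxz) as [a [Hax Haz]].
      exists (a, @cha_bot C); simpl; auto.
  - exists (@bigmeet C (map fst l)), (@bigjoin C (map snd l)). split; [|split].
    + apply clp_bigmeet. intros a Ha. apply in_map_iff in Ha.
      destruct Ha as [s [<- Hs]]. apply (Hl s Hs).
    + intro H. apply clp_bigjoin in H. destruct H as [b [Hb Hbx]].
      apply in_map_iff in Hb. destruct Hb as [s [<- Hs]]. apply (Hl s Hs), Hbx.
    + intros z Ha Hb. apply NNPP; intro Hz. destruct (Hlcov z Hz) as [s [Hs [Hsz|Hsz]]].
      * apply Hsz. apply (proj1 (clp_bigmeet _ z) Ha), in_map, Hs.
      * apply Hb, clp_bigjoin. exists (snd s); split; [apply in_map|]; auto.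
Qed.

(** Otherwise the sets [X ∖ a ∪ b] with [a ∈ P], [b ∉ P] cover [X]; a finite
    subcover gives [⋀ a_i ⊆ ⋁ b_j], contradicting primeness. *)
Lemma clp_prime_filter_point (P : PfT C) : exists x : X, forall a, proj1_sig P a <-> proj1_sig a x.
Proof.
  apply NNPP; intro Hno.
  destruct (compact_closed_cover X (fun _ => True)
              (fun s : ClpT X * ClpT X => proj1_sig P (fst s) /\ ~ proj1_sig P (snd s))
              (fun s z => ~ proj1_sig (fst s) z \/ proj1_sig (snd s) z) (ces_compact X HX))
    as [l [Hl Hlcov]].
  - apply (ces_open_ext X (fun _ => False)); [tauto|apply open_empty].
  - intros s _; apply clp_compl_union_open.
  - intros x _. pose proof (not_ex_all_not _ _ Hno x) as Hx.
    apply not_all_ex_not in Hx. destruct Hx as [a Ha].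
    destruct (classic (proj1_sig P a)) as [HPa|HPa].
    + exists (a, @cha_bot C); simpl. split; [split; [exact HPa|exact (not_in_pf_bot C P)]|tauto].
    + exists (@cha_top C, a); simpl. split; [split; [exact (in_pf_top C P)|exact HPa]|].
      right. apply NNPP; tauto.
  - set (m := @bigmeet C (map fst l)). set (j := @bigjoin C (map snd l)).
    assert (Hj : proj1_sig P j).
    { apply (in_pf_up C P m).
      - apply (in_pf_bigmeet C ClpUp_is_CHA). intros a Ha. apply in_map_iff in Ha.
        destruct Ha as [s [<- Hs]]. apply (Hl s Hs).
      - apply clp_le. intros x Hx. destruct (Hlcov x I) as [s [Hs [Hsx|Hsx]]].
        -- exfalso; apply Hsx. apply (proj1 (clp_bigmeet _ x) Hx), in_map, Hs.
        -- apply clp_bigjoin. exists (snd s); split; [apply in_map|]; auto. }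
    apply (in_pf_bigjoin C ClpUp_is_CHA P (map snd l)) in Hj.
    destruct Hj as [b [Hb HPb]]. apply in_map_iff in Hb. destruct Hb as [s [<- Hs]].
    apply (Hl s Hs), HPb.
Qed.

Lemma point_prime_filter (x : X) : prime_filter C (fun a : ClpT X => proj1_sig a x).
Proof.
  split.
  - exact I.
  - intros a b Ha Hab. exact (proj1 (clp_le a b) Hab x Ha).
  - intros a b Ha Hb; split; auto.
  - intro H; exact H.
  - intros a b H; exact H.
Qed.

Definition eps (x : X) : PfT C := exist _ (fun a : ClpT X => proj1_sig a x) (point_prime_filter x).

Definition eps_inv (P : PfT C) : X :=
  proj1_sig (constructive_indefinite_description _ (clp_prime_filter_point P)).

Lemma eps_inv_spec (P : PfT C) (a : ClpT X) : proj1_sig P a <-> proj1_sig a (eps_inv P).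
Proof.
  unfold eps_inv. destruct (constructive_indefinite_description _ _) as [x Hx]; apply Hx.
Qed.

Lemma eps_eps_inv (P : PfT C) : eps (eps_inv P) = P.
Proof. apply sig_ext, pred_ext; intro a; symmetry; apply eps_inv_spec. Qed.

Lemma eps_le (x y : X) : ces_le x y <-> @ces_le (Pf C) (eps x) (eps y).
Proof.
  split.
  - intros H a Ha. exact (proj2 (proj2_sig a) x y H Ha).
  - intro H. apply NNPP; intro Hn. destruct (clp_separate x y Hn) as [a [Hax Hay]].
    apply Hay, H, Hax.
Qed.

Lemma eps_inv_eps (x : X) : eps_inv (eps x) = x.
Proof.
  apply (le_antisym X HX); apply eps_le; rewrite eps_eps_inv; intros a Ha; exact Ha.
Qed.

Lemma eps_open (U : PfT C -> Prop) : @ces_open (Pf C) U -> ces_open (fun x => U (eps x)).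
Proof.
  apply gen_open_preimage. intros V [a [Ha|Ha]].
  - apply (ces_open_ext X (proj1_sig a)); [intro x; rewrite (Ha (eps x)); reflexivity|].
    apply (proj2_sig a).
  - apply (ces_open_ext X (fun x => ~ proj1_sig a x)).
    { intro x; rewrite (Ha (eps x)); reflexivity. }
    apply (proj2_sig a).
Qed.

Lemma eps_inv_open (U : X -> Prop) : ces_open U -> @ces_open (Pf C) (fun p => U (eps_inv p)).
Proof.
  intro HU.
  apply (go_ext _ (fun p => exists V, (exists s, V = theta_diff C s /\
           forall z, proj1_sig (fst s) z -> ~ proj1_sig (snd s) z -> U z) /\ V p)).
  - intro p; split.
    + intros [V [[s [-> Hs]] [Hp1 Hp2]]].
      apply Hs; [apply eps_inv_spec, Hp1|intro H; apply Hp2, eps_inv_spec, H].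
    + intro Hp. destruct (clp_pair_nbhd U (eps_inv p) HU Hp) as [a [b [Ha [Hb H]]]].
      exists (theta_diff C (a, b)); split; [exists (a, b); auto|].
      split; [apply eps_inv_spec, Ha|intro H'; apply Hb, eps_inv_spec, H'].
  - apply go_union. intros V [s [-> _]]. apply theta_diff_open.
Qed.

Lemma eps_R (a' : PfT C -> Prop) : @clopen_up (Pf C) a' -> forall x y : X,
  ces_R (fun u => a' (eps u)) x y <-> @ces_R (Pf C) a' (eps x) (eps y).
Proof.
  intros Ha' x y. destruct (Pf_clopen_up C ClpUp_is_CHA a' Ha') as [a Ha].
  replace (fun u => a' (eps u)) with (proj1_sig a)
    by (apply pred_ext; intro u; symmetry; apply Ha).
  change (ces_R (proj1_sig a) x y <-> Pf_R C a' (eps x) (eps y)).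
  rewrite (Pf_R_theta C ClpUp_is_CHA a' a _ _ Ha). split.
  - intros Hxy b Hb. apply Hb, Hxy.
  - intro H. apply NNPP; intro Hn.
    destruct (clp_R_separation (proj1_sig a) (proj2_sig a) x y Hn) as [c [Hc Hcy]].
    apply Hcy, (H c), Hc.
Qed.

Theorem eps_iso : CES_iso X (Pf C) eps.
Proof.
  apply (CES_iso_intro X (Pf C) eps eps_inv HX (Pf_is_CES C ClpUp_is_CHA)).
  - exact eps_inv_eps.
  - exact eps_eps_inv.
  - exact eps_open.
  - exact eps_inv_open.
  - exact eps_le.
  - exact eps_R.
Qed.

End ClopenUpsets.

(** * Morphisms and the duality *)

Section Morphisms.
Variables (A B : CHAdata) (HA : is_CHA A) (HB : is_CHA B) (h : A -> B) (Hh : is_CHA_hom A B h).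

Lemma hom_image_meet_closed (p : PfT A) :
  meet_closed B (fun c => exists d, proj1_sig p d /\ c = h d).
Proof.
  split.
  - exists cha_top; split; [apply in_pf_top|symmetry; apply (hom_top A B h Hh)].
  - intros a b [d1 [Hd1 ->]] [d2 [Hd2 ->]]. exists (cha_meet d1 d2); split.
    + apply (in_pf_meet A HA); auto.
    + symmetry; apply (hom_meet A B h Hh).
Qed.

Lemma hom_image_compl_ideal (p : PfT A) :
  is_ideal B (fun c => exists d, ~ proj1_sig p d /\ cha_le c (h d)).
Proof.
  split.
  - exists cha_bot; split; [apply not_in_pf_bot|].
    rewrite (hom_bot A B h Hh). apply (cha_le_refl B HB).
  - intros a b [d [Hd Hbd]] Hab. exists d; split; [exact Hd|apply (cha_le_trans B HB _ b); auto].
  - intros a b [d1 [Hd1 H1]] [d2 [Hd2 H2]]. exists (cha_join d1 d2); split.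
    + rewrite (in_pf_join A HA); tauto.
    + rewrite (hom_join A B h Hh). apply (cha_join_mono B HB); auto.
Qed.

Lemma pf_mor_le (z : PfT B) (z' : PfT A) :
  (forall b, (exists d, ~ proj1_sig z' d /\ cha_le b (h d)) -> ~ proj1_sig z b) ->
  @ces_le (Pf A) (pf_mor A B h Hh z) z'.
Proof.
  intros Hz a Ha. apply NNPP; intro Hn. apply (Hz (h a)); [|exact Ha].
  exists a; split; [exact Hn|apply (cha_le_refl B HB)].
Qed.

Lemma pf_mor_preimage_theta (a' : PfT A -> Prop) (a : A) :
  (forall p, a' p <-> theta A a p) ->
  forall u : PfT B, a' (pf_mor A B h Hh u) <-> theta B (h a) u.
Proof. intros Ha u. rewrite (Ha (pf_mor A B h Hh u)). reflexivity. Qed.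

Lemma pf_mor_bounded (x : PfT B) (z' : PfT A) :
  @ces_le (Pf A) (pf_mor A B h Hh x) z' ->
  exists z, @ces_le (Pf B) x z /\ pf_mor A B h Hh z = z'.
Proof.
  intro Hxz.
  destruct (prime_filter_theorem B HB
              (filter_join B (proj1_sig x) (fun c => exists d, proj1_sig z' d /\ c = h d))
              (fun c => exists d, ~ proj1_sig z' d /\ cha_le c (h d))) as [z [Hz Hz']].
  - apply (filter_join_is_filter B HB); [apply (pf_meet_closed B HB)|apply hom_image_meet_closed].
  - apply hom_image_compl_ideal.
  - intros c [m [e [Hm [[d [Hd ->]] Hc]]]] [d' [Hd' Hcd']]. apply Hd'.
    apply (in_pf_imp A HA z' d d' Hd), Hxz. simpl.
    rewrite (hom_imp A B h Hh). apply (in_pf_up B x m); [exact Hm|].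
    apply (imp_residual B HB), (cha_le_trans B HB _ c); auto.
  - exists z; split.
    + intros b Hb. apply Hz. exists b, (h cha_top).
      split; [exact Hb|split; [exists cha_top; split; [apply in_pf_top|reflexivity]|]].
      apply (cha_meet_lb_l B HB).
    + apply (le_antisym (Pf A) (Pf_is_CES A HA)); [apply pf_mor_le; exact Hz'|].
      intros a Ha. apply Hz. exists cha_top, (h a).
      split; [apply in_pf_top|split; [exists a; auto|apply (cha_meet_lb_r B HB)]].
Qed.

Lemma pf_mor_R_back (a' : PfT A -> Prop) : @clopen_up (Pf A) a' ->
  forall (x : PfT B) (z' : PfT A), Pf_R A a' (pf_mor A B h Hh x) z' ->
  exists z, Pf_R B (fun u => a' (pf_mor A B h Hh u)) x z /\
            @ces_le (Pf A) (pf_mor A B h Hh z) z'.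
Proof.
  intros Ha' x z' Hxz. destruct (Pf_clopen_up A HA a' Ha') as [a Ha].
  pose proof (proj1 (Pf_R_theta A HA a' a _ _ Ha) Hxz) as H. simpl in H.
  destruct (prime_filter_theorem B HB _ _ (cond_is_filter B HB (h a) x)
              (hom_image_compl_ideal z')) as [z [Hz Hz']].
  - intros c Hc [d [Hd Hcd]]. apply Hd, H. rewrite (hom_cond A B h Hh).
    apply (in_pf_up B x _ _ Hc), (cha_cond_mono B HB), Hcd.
  - exists z; split.
    + apply (proj2 (Pf_R_theta B HB _ (h a) x z (pf_mor_preimage_theta a' a Ha))), Hz.
    + apply pf_mor_le; exact Hz'.
Qed.

Theorem pf_mor_CES : is_CES_mor (Pf B) (Pf A) (pf_mor A B h Hh).
Proof.
  split.
  - apply gen_open_preimage. intros V [a [Ha|Ha]]; apply go_sub; exists (h a);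
      [left|right]; intro p; rewrite (Ha (pf_mor A B h Hh p)); reflexivity.
  - intros x y Hxy a Ha. apply Hxy, Ha.
  - exact pf_mor_bounded.
  - intros a' Ha' x y Hxy. destruct (Pf_clopen_up A HA a' Ha') as [a Ha].
    apply (proj2 (Pf_R_theta A HA a' a _ _ Ha)). intros b Hb.
    apply (proj1 (Pf_R_theta B HB _ (h a) x y (pf_mor_preimage_theta a' a Ha)) Hxy).
    simpl in Hb. rewrite (hom_cond A B h Hh) in Hb. exact Hb.
  - exact pf_mor_R_back.
Qed.

End Morphisms.

Theorem clp_mor_hom (X Y : CESdata) (HX : is_CES X) (HY : is_CES Y) (f : X -> Y)
  (Hf : is_CES_mor X Y f) : is_CHA_hom (ClpUp Y HY) (ClpUp X HX) (clp_mor X Y f Hf).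
Proof.
  split; try (intros; apply sig_ext, pred_ext; intro; simpl; tauto).
  - intros a b; apply sig_ext, pred_ext; intro x; simpl. unfold imp_set, downset. split.
    + intros H [z [Hxz [Ha Hb]]]. apply H. exists (f z); split; auto.
      apply (mor_mono X Y f Hf), Hxz.
    + intros H [y [Hxy [Ha Hb]]]. destruct (mor_bounded X Y f Hf x y Hxy) as [z [Hxz <-]].
      apply H. exists z; auto.
  - intros a b; apply sig_ext, pred_ext; intro x; simpl. unfold cboxset. split.
    + intros H z Hz. apply H, (mor_R_forth X Y f Hf (proj1_sig a) (proj2_sig a)), Hz.
    + intros H y Hy.
      destruct (mor_R_back X Y f Hf (proj1_sig a) (proj2_sig a) x y Hy) as [z [Hz Hzy]].
      apply (proj2 (proj2_sig b) (f z) y Hzy), H, Hz.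
Qed.

Lemma CHA_hom_inverse (A B : CHAdata) (h : A -> B) (g : B -> A) : is_CHA_hom A B h ->
  (forall a, g (h a) = a) -> (forall b, h (g b) = b) -> is_CHA_hom B A g.
Proof.
  intros Hh Hgh Hhg. split.
  - rewrite <- (hom_top A B h Hh); auto.
  - rewrite <- (hom_bot A B h Hh); auto.
  - intros x y. rewrite <- (Hhg x), <- (Hhg y), <- (hom_meet A B h Hh), !Hgh; reflexivity.
  - intros x y. rewrite <- (Hhg x), <- (Hhg y), <- (hom_join A B h Hh), !Hgh; reflexivity.
  - intros x y. rewrite <- (Hhg x), <- (Hhg y), <- (hom_imp A B h Hh), !Hgh; reflexivity.
  - intros x y. rewrite <- (Hhg x), <- (Hhg y), <- (hom_cond A B h Hh), !Hgh; reflexivity.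
Qed.

Definition eta (A : CHAdata) (a : A) : ClpT (Pf A) := exist _ (theta A a) (theta_clopen_up A a).

Lemma eta_hom (A : CHAdata) (HA : is_CHA A) (HP : is_CES (Pf A)) :
  is_CHA_hom A (ClpUp (Pf A) HP) (eta A).
Proof.
  split; try intros a b; apply sig_ext, pred_ext; intro p; simpl.
  - split; [auto|intros _; exact (in_pf_top A p)].
  - split; [exact (not_in_pf_bot A p)|intros []].
  - apply (in_pf_meet A HA).
  - apply (in_pf_join A HA).
  - pose proof (Pf_down_theta_diff A HA a b p) as E.
    unfold imp_set, downset, theta in *. split; [tauto|intro H; apply NNPP; tauto].
  - symmetry; apply (Pf_cboxset_theta A HA).
Qed.

Theorem eta_iso (A : CHAdata) (HA : is_CHA A) (HP : is_CES (Pf A)) :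
  CHA_iso A (ClpUp (Pf A) HP) (eta A).
Proof.
  split; [apply eta_hom, HA|].
  set (g := fun U : ClpT (Pf A) => proj1_sig (constructive_indefinite_description _
              (Pf_clopen_up A HA (proj1_sig U) (proj2_sig U)))).
  assert (Hg : forall U p, proj1_sig U p <-> theta A (g U) p).
  { intros U p. unfold g. destruct (constructive_indefinite_description _ _) as [a Ha]; apply Ha. }
  assert (Hgh : forall a, g (eta A a) = a).
  { intro a. symmetry. apply (theta_inj A HA). intro p. apply (Hg (eta A a) p). }
  assert (Hhg : forall U, eta A (g U) = U).
  { intro U. apply sig_ext, pred_ext; intro p; simpl. symmetry; apply Hg. }
  exists g; split; [|auto].
  apply (CHA_hom_inverse A (ClpUp (Pf A) HP) (eta A)); auto. apply eta_hom, HA.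
Qed.

Theorem theorem4p23 :
  (* Pf sends conditional Heyting algebras to conditional Esakia spaces *)
  (forall A : CHAdata, is_CHA A -> is_CES (Pf A)) /\
  (* ClpUp sends conditional Esakia spaces to conditional Heyting algebras *)
  (forall (X : CESdata) (HX : is_CES X), is_CHA (ClpUp X HX)) /\
  (* Pf sends CHA-morphisms h : A -> B to CES-morphisms h^{-1} : Pf B -> Pf A *)
  (forall (A B : CHAdata) (h : A -> B) (Hh : is_CHA_hom A B h),
      is_CHA A -> is_CHA B -> is_CES_mor (Pf B) (Pf A) (pf_mor A B h Hh)) /\
  (* ClpUp sends CES-morphisms f : X -> Y to CHA-morphisms f^{-1} *)
  (forall (X Y : CESdata) (HX : is_CES X) (HY : is_CES Y) (f : X -> Y)
      (Hf : is_CES_mor X Y f),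
      is_CHA_hom (ClpUp Y HY) (ClpUp X HX) (clp_mor X Y f Hf)) /\
  (* natural isomorphism  A ≅ ClpUp (Pf A) *)
  (exists eta : forall A : CHAdata, A -> ClpT (Pf A),
      (forall (A : CHAdata) (HA : is_CHA A) (HP : is_CES (Pf A)),
          CHA_iso A (ClpUp (Pf A) HP) (eta A)) /\
      (forall (A B : CHAdata) (HA : is_CHA A) (HB : is_CHA B)
         (h : A -> B) (Hh : is_CHA_hom A B h)
         (Hm : is_CES_mor (Pf B) (Pf A) (pf_mor A B h Hh)) (a : A),
          clp_mor (Pf B) (Pf A) (pf_mor A B h Hh) Hm (eta A a) = eta B (h a))) /\
  (* natural isomorphism  X ≅ Pf (ClpUp X) *)
  (exists eps : forall (X : CESdata) (HX : is_CES X), X -> PfT (ClpUp X HX),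
      (forall (X : CESdata) (HX : is_CES X),
          CES_iso X (Pf (ClpUp X HX)) (eps X HX)) /\
      (forall (X Y : CESdata) (HX : is_CES X) (HY : is_CES Y)
         (f : X -> Y) (Hf : is_CES_mor X Y f)
         (Hc : is_CHA_hom (ClpUp Y HY) (ClpUp X HX) (clp_mor X Y f Hf)) (x : X),
          pf_mor (ClpUp Y HY) (ClpUp X HX) (clp_mor X Y f Hf) Hc (eps X HX x)
          = eps Y HY (f x))).
Proof.
  split; [exact Pf_is_CES|].
  split; [exact ClpUp_is_CHA|].
  split; [intros A B h Hh HA HB; exact (pf_mor_CES A B HA HB h Hh)|].
  split; [exact clp_mor_hom|].
  split.
  - exists eta; split; [exact eta_iso|].
    intros; apply sig_ext; reflexivity.
  - exists eps; split; [exact eps_iso|].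
    intros; apply sig_ext; reflexivity.
Qed.
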